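(* Let $t, b \ge 1$ be integers and $T$ a finite non-empty subset of $\mathbb{Z}^b$. Let $S$ be a set and let $\mathcal{F}$ be a family consisting of at least $(t-1)|T|^2$ pairwise disjoint subsets of $S$. Then there is a set $X \subset \mathbb{Z}^b \times S$ satisfying: (1) $X$ is a union of pairwise disjoint sets of the form $(T+x)\times A$ with $x \in \mathbb{Z}^b$ and $A \in \mathcal{F}$; and (2) for each $x \in \mathbb{Z}^b$ there is some $m \equiv 1 \pmod t$ such that $\{y \in S : (x,y) \in X\}$ is a union of $m$ distinct members of $\mathcal{F}$. *)

From HB Require Import structures.
From mathcomp Require Import all_boot all_order all_algebra finmap.
From mathcomp Require Import boolp classical_sets.
Set Implicit Arguments. Unset Strict Implicit. Unset Printing Implicit Defensive.
Import GRing.Theory Num.Theory.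
Local Open Scope ring_scope.
Local Open Scope classical_set_scope.

Definition translate (b : nat) (T : {fset 'rV[int]_b}) (x : 'rV[int]_b)
  : set 'rV[int]_b := [set y + x | y in [set` T]].

Definition pw_disjoint (U : Type) (F : set (set U)) : Prop :=
  forall A B, F A -> F B -> A <> B -> A `&` B = set0.

From HB Require Import structures.
From mathcomp Require Import all_boot all_order all_algebra finmap.
From mathcomp Require Import boolp classical_sets zify.
Set Implicit Arguments. Unset Strict Implicit. Unset Printing Implicit Defensive.
Import Order.TTheory GRing.Theory Num.Theory.

(* A base-B expansion, injective on T, reduces Z^b to Z, where the
   congruence sum_(tau in T) H (x - tau) = 1 (mod t) is solved with 0 <= H < t by
   recursion from each end of Z (the term of the smallest offset is solved for).
   Independently, Z^b is coloured with |T|^2 colours so that translates of T of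
   equal colour are disjoint: T + p and T + q meet only if q - p is one of the
   fewer than |T|^2 nonzero differences of T, so a greedy colouring works.
   Enumerate the (t-1)|T|^2 given members of F as A r c, r < t - 1, c < |T|^2,
   and take the union of the blocks (T + p) x A r (colour p) over r < H p.
   Two blocks meeting share their F-component, hence their colour and r, hence
   (by the colouring) their base point; the fibre over x is the union of the
   distinct sets A r (colour (x - tau)), r < H (x - tau), whose number is
   sum_tau H (x - tau) = 1 (mod t). *)

Lemma strong_recursion (A : Type) (a0 : A) (Fr : nat -> (nat -> A) -> A) :
    (forall n f f', (forall k, k < n -> f k = f' k) -> Fr n f = Fr n f') ->
  exists c : nat -> A, forall n, c n = Fr n c.
Proof.
move=> Fr_ext.
pose fix build n := if n is m.+1 then rcons (build m) (Fr m (nth a0 (build m))) else [::].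
have size_build n : size (build n) = n by elim: n => //= n IH; rewrite size_rcons IH.
have nth_build m k : k < m -> nth a0 (build m) k = nth a0 (build k.+1) k.
  elim: m => // m IH; rewrite ltnS leq_eqVlt => /predU1P[-> // | ltkm].
  by rewrite /= nth_rcons size_build ltkm IH.
exists (fun n => nth a0 (build n.+1) n) => n.
by rewrite /= nth_rcons size_build ltnn eqxx; apply: Fr_ext => k /nth_build.
Qed.

Lemma causal_convolution_solution (t : nat) (En : seq nat) :
    0 < t -> uniq En -> 0 \in En ->
  exists u : nat -> nat, forall n, \sum_(e <- En | e <= n) u (n - e) = 1 %[mod t].
Proof.
move=> t_gt0 En_uniq En0.
(* With S the sum over the nonzero offsets, u n + S = 1 + t * S. *)
pose Fr n (f : nat -> nat) :=
  1 + t.-1 * \sum_(e <- En | (e <= n) && (e != 0)) f (n - e).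
have [u uE] : exists u : nat -> nat, forall n, u n = Fr n u.
  apply: strong_recursion 0 _ _ => n f f' eq_ff'; rewrite /Fr; congr (1 + _ * _).
  apply: eq_bigr => e /andP[le_en nz_e]; apply: eq_ff'.
  by rewrite ltn_subrL lt0n nz_e (leq_trans _ le_en) // lt0n.
exists u => n; rewrite -big_filter (bigD1_seq 0) ?filter_uniq ?mem_filter //.
rewrite big_filter_cond subn0 uE /Fr.
by rewrite /= -addnA -mulSnr prednK // mulnC addnC modnMDl.
Qed.

Local Open Scope ring_scope.

Lemma one_sided_convolution_solution (t : nat) (E : seq int) :
    (0 < t)%N -> uniq E -> E != [::] ->
  exists (a : int) (u : int -> nat),
    forall k, (\sum_(e <- E) u (k - e)%R = (a <= k)%R %[mod t])%N.
Proof.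
case: E => [//|e0 E'] t_gt0 E_uniq _; set E := e0 :: E'.
pose a := \big[Order.min/e0]_(e <- E) e.
have aE : a \in E.
  rewrite /a big_seq; apply: (big_ind (fun x => x \in E)) => [|x y|//].
    exact: mem_head.
  by rewrite /Order.min; case: ifP.
have a_le e : e \in E -> a <= e by move=> eE; exact: ge_bigmin_seq.
pose En := [seq `|e - a|%N | e <- E].
have En_uniq : uniq En.
  rewrite map_inj_in_uniq // => x y xE yE /(congr1 Posz).
  by rewrite !gez0_abs ?subr_ge0 ?a_le //; apply: subIr.
have En0 : 0%N \in En by apply/mapP; exists a; rewrite ?subrr.
have [v vE] := causal_convolution_solution t_gt0 En_uniq En0.
pose u z := if 0 <= z then v `|z|%N else 0%N.
have u_diff m n : u (m%:Z - n%:Z) = if (n <= m)%N then v (m - n)%N else 0%N.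
  by rewrite /u subr_ge0 lez_nat; case: leqP => // nm; rewrite subzn.
exists a, u => k; case: (leP a k) => [le_ak | lt_ka].
  rewrite -(vE `|k - a|%N) big_map; congr (modn _ _).
  rewrite [RHS]big_mkcond; apply: eq_big_seq => e eE /=.
  have -> : k - e = `|k - a|%N%:Z - `|e - a|%N%:Z.
    by rewrite !gez0_abs ?subr_ge0 // ?a_le // opprB addrA subrK.
  exact: u_diff.
rewrite big1_seq // => e /andP[_ eE]; rewrite /u ifF //; apply/negbTE.
by rewrite -ltNge subr_lt0 (lt_le_trans lt_ka) ?a_le.
Qed.

Lemma convolution_solution (t : nat) (E : seq int) :
    (0 < t)%N -> uniq E -> E != [::] ->
  exists h : int -> nat, (forall j, h j < t)%N /\
    forall k, (\sum_(e <- E) h (k - e)%R = 1 %[mod t])%N.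
Proof.
move=> t_gt0 E_uniq E_nil.
have [a1 [u1 u1E]] := one_sided_convolution_solution t_gt0 E_uniq E_nil.
have [a2 [u2 u2E]] : exists (a : int) (u : int -> nat),
    forall k, (\sum_(e <- E) u (k + e)%R = (a <= k)%R %[mod t])%N.
  have [||a [u uE]] := @one_sided_convolution_solution t [seq - e | e <- E] t_gt0.
  - by rewrite map_inj_uniq //; exact: oppr_inj.
  - by move: E_nil; apply: contra => /eqP; case: (E).
  exists a, u => k; rewrite -uE big_map; congr (modn _ _).
  by apply: eq_bigr => e _; rewrite opprK.
(* The [u1] part contributes exactly when a1 <= k, the reflected [u2] part
   exactly when k < a1. *)
exists (fun j => (u1 j + u2 (a1 + a2 - 1 - j)%R) %% t)%N; split => [j|k].
  by rewrite ltn_mod.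
rewrite modn_summ big_split /= -modnDm u1E.
have -> : (\sum_(e <- E) u2 (a1 + a2 - 1 - (k - e))%R
           = \sum_(e <- E) u2 (a1 + a2 - 1 - k + e)%R)%N.
  by apply: eq_bigr => e _; rewrite opprB addrA addrAC.
rewrite u2E modnDm.
have -> : (a2 <= a1 + a2 - 1 - k) = (k < a1).
  by apply/idP/idP; lia.
by rewrite ltNge; case: (a1 <= k).
Qed.

Lemma radix_digits_eq0 (B : int) n (d : 'I_n -> int) :
  (forall i, `|d i| < B) -> \sum_(i < n) d i * B ^+ i = 0 -> forall i, d i = 0.
Proof.
elim: n d => [d _ _ [] //|n IH d d_lt].
rewrite big_ord_recl expr0 mulr1.
under eq_bigr do rewrite lift0 exprS mulrCA.
rewrite -mulr_sumr; set S := \sum_(i < n) _ => d0_S.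
have B_gt0 : 0 < B by apply: le_lt_trans (d_lt ord0).
have S0 : S = 0.
  have := d_lt ord0; rewrite (_ : d ord0 = - (B * S)); last first.
    by apply/eqP; rewrite -addr_eq0 d0_S.
  by rewrite normrN normrM gtr0_norm // -{2}[B]mulr1 ltr_pM2l // => ?; lia.
move=> i; case: (unliftP ord0 i) => [j -> | ->].
  by apply: (IH (d \o lift ord0)) => // k; exact: d_lt.
by rewrite S0 mulr0 addr0 in d0_S.
Qed.

Definition radix b (B : int) (x : 'rV[int]_b) : int := \sum_(i < b) x 0 i * B ^+ i.

Lemma radixB b B (x y : 'rV[int]_b) : radix B (x - y) = radix B x - radix B y.
Proof. by rewrite /radix -sumrB; apply: eq_bigr => i _; rewrite !mxE mulrBl. Qed.

Lemma radix_injective b (T : {fset 'rV[int]_b}) :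
  exists B : int, {in T &, injective (radix B)}.
Proof.
pose M := \big[Order.max/0]_(x <- T) \big[Order.max/0]_(y <- T)
  \big[Order.max/0]_(i < b) `|x 0 i - y 0 i|.
exists (M + 1) => x y xT yT /eqP; rewrite -subr_eq0 -radixB => /eqP digits0.
apply/eqP; rewrite -subr_eq0; apply/eqP/rowP => i; rewrite [RHS]mxE.
apply: (radix_digits_eq0 (d := fun j => (x - y) 0 j) _ digits0) => j.
rewrite !mxE ltzD1 /M.
apply: le_trans (le_bigmax_seq _ _ _ _ xT isT) => /=.
apply: le_trans (le_bigmax_seq _ _ _ _ yT isT) => /=.
exact: le_bigmax_seq _ _ _ _ (mem_index_enum j) isT.
Qed.

Lemma lattice_convolution_solution b t (T : {fset 'rV[int]_b}) :
    (0 < t)%N -> T != fset0 ->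
  exists H : 'rV[int]_b -> nat, (forall p, H p < t)%N /\
    forall x, (\sum_(tau <- T) H (x - tau)%R = 1 %[mod t])%N.
Proof.
move=> t_gt0 T_neq0; have [B radix_inj] := radix_injective T.
have E_uniq : uniq [seq radix B tau | tau <- T].
  by rewrite (map_inj_in_uniq radix_inj) fset_uniq.
have E_nil : [seq radix B tau | tau <- T] != [::].
  case/fset0Pn: T_neq0 => tau tauT; apply/eqP => E0.
  by have := map_f (radix B) tauT; rewrite E0.
have [h [h_lt hE]] := convolution_solution t_gt0 E_uniq E_nil.
exists (h \o radix B); split=> [p | x]; first exact: h_lt.
rewrite -(hE (radix B x)) big_map.
by congr (modn _ _); apply: eq_bigr => tau _; rewrite /= radixB.
Qed.

Lemma greedy_colouring_nat (K : nat) (nb : nat -> seq nat) :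
    (forall n, size (nb n) < K)%N ->
  exists c : nat -> 'I_K, forall n m, m \in nb n -> (m < n)%N -> c n != c m.
Proof.
move=> nb_lt; have K_gt0 : (0 < K)%N by apply: leq_ltn_trans (nb_lt 0%N).
pose used n (f : nat -> 'I_K) := [seq f m | m <- nb n & (m < n)%N].
have fresh n f : exists k, k \notin used n f.
  apply/existsP; apply: contraTT (nb_lt n); rewrite negb_exists => /forallP used_all.
  have : (size (enum 'I_K) <= size (used n f))%N.
    by apply: uniq_leq_size (enum_uniq _) _ => k _; have := used_all k; rewrite negbK.
  rewrite size_enum_ord size_map size_filter -leqNgt => /leq_trans; apply.
  exact: count_size.
pose Fr n f := odflt (Ordinal K_gt0) [pick k | k \notin used n f].
have [c cE] : exists c, forall n, c n = Fr n c.
  apply: strong_recursion (Ordinal K_gt0) _ _ => n f f' eq_ff'; rewrite /Fr /used.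
  congr odflt; apply: eq_pick => k; congr (~~ (k \in _)).
  by apply/eq_in_map => m; rewrite mem_filter => /andP[lt_mn _]; exact: eq_ff'.
exists c => n m mn lt_mn; rewrite cE /Fr; case: pickP => [k /= k_fresh | none].
  by apply: contraNneq k_fresh => ->; apply: map_f; rewrite mem_filter lt_mn.
by have [k] := fresh n c; rewrite none.
Qed.

Lemma greedy_colouring (T : countType) (K : nat) (nb : T -> seq T) :
    (forall x, size (nb x) < K)%N -> (forall x y, y \in nb x -> x \in nb y) ->
  exists c : T -> 'I_K, forall x y, y \in nb x -> x != y -> c x != c y.
Proof.
case: K => [|K] nb_lt nb_sym.
  by exists (fun x => False_rect _ (notF (nb_lt x))) => x; have := nb_lt x.
pose nbn n := if choice.unpickle n is Some x then map choice.pickle (nb x) else [::].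
have [|c c_ok] := @greedy_colouring_nat K.+1 nbn.
  by move=> n; rewrite /nbn; case: (choice.unpickle n) => [x|]; rewrite ?size_map.
have nbnP x y : y \in nb x -> choice.pickle y \in nbn (choice.pickle x).
  by move=> yx; rewrite /nbn choice.pickleK map_f.
exists (c \o choice.pickle) => x y yx neq_xy /=.
have neq_p : choice.pickle x != choice.pickle y.
  by rewrite (inj_eq (pcan_inj choice.pickleK)).
case: ltngtP neq_p => // [lt|lt] _.
  by rewrite eq_sym; apply: c_ok lt; exact/nbnP/nb_sym.
exact: c_ok (nbnP _ _ yx) lt.
Qed.

Lemma translate_colouring b (T : {fset 'rV[int]_b}) : T != fset0 ->
  exists g : 'rV[int]_b -> 'I_(#|`T| ^ 2), forall p q tau tau',
    tau \in T -> tau' \in T -> tau + p = tau' + q -> g p = g q -> p = q.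
Proof.
move=> /fset0Pn[tau0 tau0T].
pose D := [seq tau - tau' | tau <- T, tau' <- T].
pose nb p := [seq p + d | d <- D & d != 0].
have nb_lt p : (size (nb p) < #|`T| ^ 2)%N.
  have -> : (#|`T| ^ 2 = size D)%N by rewrite size_allpairs -mulnn.
  rewrite size_map size_filter -(count_predC (fun d => d != 0)) -[X in (X < _)%N]addn0.
  rewrite ltn_add2l -has_count; apply/hasP; exists 0; last by rewrite /= negbK.
  by rewrite -(subrr tau0); apply: allpairs_f.
have nb_sym p q : q \in nb p -> p \in nb q.
  case/mapP => d + ->; rewrite mem_filter => /andP[nz_d].
  case/allpairsP => -[tau tau'] [tauT tau'T /= d_eq]; rewrite {}d_eq in nz_d *.
  apply/mapP; exists (tau' - tau); last by rewrite -addrA -[tau' - tau]opprB subrr addr0.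
  by rewrite mem_filter -oppr_eq0 opprB nz_d; apply/allpairsP; exists (tau', tau).
have [g g_ok] := greedy_colouring nb_lt nb_sym.
exists g => p q tau tau' tauT tau'T e_pq; apply: contra_eq => neq_pq.
have e_q : q = p + (tau - tau') by rewrite addrCA addrA e_pq [tau' + q]addrC addrK.
have nz_d : tau - tau' != 0 by apply: contra neq_pq; rewrite e_q => /eqP->; rewrite addr0.
apply: g_ok neq_pq; apply/mapP; exists (tau - tau') => //.
by rewrite mem_filter nz_d; apply/allpairsP; exists (tau, tau').
Qed.

Lemma pair_indexed_family (U : Type) (P : U -> Prop) m n :
    (exists g : 'I_(m * n) -> U, injective g /\ forall k, P (g k)) ->
  exists A : 'I_m -> 'I_n -> U, injective (uncurry A) /\ forall i j, P (A i j).
Proof.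
case=> g [g_inj gP]; exists (fun i j => g (mxvec_index i j)).
split=> // -[i j] [i' j'] /g_inj; have [f fK _] := curry_mxvec_bij m n.
by move=> /(congr1 f); rewrite !(fK (_, _)).
Qed.

Local Open Scope classical_set_scope.

Lemma bigcup_seq_enum (I : eqType) (U : Type) (L : seq I) (B : I -> set U) :
    uniq L -> {in L &, injective B} ->
  exists f : 'I_(size L) -> set U, [/\ injective f, forall i, exists2 j, j \in L & f i = B j
    & \bigcup_(j in [set` L]) B j = \bigcup_(i in [set: 'I_(size L)]) f i].
Proof.
move=> L_uniq B_inj; exists (fun i => B (tnth (in_tuple L) i)); split.
- move=> i i' /B_inj eq_ii'; apply: (elimT (tuple_uniqP (in_tuple L)) L_uniq).
  by apply: eq_ii'; exact: mem_tnth.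
- by move=> i; exists (tnth (in_tuple L) i) => //; exact: mem_tnth.
apply/seteqP; split=> y [j jL Bjy].
  have j_lt : (index j L < size L)%N by rewrite index_mem.
  by exists (Ordinal j_lt) => //; rewrite (tnth_nth j) /= nth_index.
by exists (tnth (in_tuple L) j) => //; exact: mem_tnth.
Qed.

Section Tiling.
Variables (t b K : nat) (T : {fset 'rV[int]_b}) (S : Type) (F : set (set S)).
Variables (A : 'I_(t - 1) -> 'I_K -> set S) (g : 'rV[int]_b -> 'I_K) (H : 'rV[int]_b -> nat).
Hypothesis F_disj : pw_disjoint F.
Hypothesis A_inj : injective (uncurry A).
Hypothesis A_F : forall r c, F (A r c).
Hypothesis g_sep : forall p q tau tau',
  tau \in T -> tau' \in T -> tau + p = tau' + q -> g p = g q -> p = q.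
Hypothesis H_lt : forall p, (H p < t)%N.
Hypothesis H_sum : forall x, (\sum_(tau <- T) H (x - tau)%R = 1 %[mod t])%N.

Definition block p (r : 'I_(t - 1)) := translate T p `*` A r (g p).

Definition blocks := [set B | exists p (r : 'I_(t - 1)), (r < H p)%N /\ B = block p r].

Definition tiling := \bigcup_(B in blocks) B.

Lemma block_meet p p' r r' z y :
  block p r (z, y) -> block p' r' (z, y) -> p = p' /\ r = r'.
Proof.
move=> [[tau tauT /= e] Ay] [[tau' tau'T /= e'] Ay'].
have eqA : A r (g p) = A r' (g p').
  apply: contrapT => neqA; have := F_disj (A_F _ _) (A_F _ _) neqA.
  by move/seteqP => [/(_ y) + _]; apply.
have [<- eq_g] := A_inj (x1 := (r, g p)) (x2 := (r', g p')) eqA.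
by split=> //; apply: g_sep tauT tau'T _ eq_g; rewrite e e'.
Qed.

Lemma blocks_disjoint : pw_disjoint blocks.
Proof.
move=> _ _ [p [r [_ ->]]] [p' [r' [_ ->]]] neq.
apply/seteqP; split=> // -[z y] [Bzy B'zy].
by apply: neq; have [-> ->] := block_meet Bzy B'zy.
Qed.

Definition fibre_index x : seq ('rV[int]_b * 'I_(t - 1)) :=
  [seq (tau, r) | tau <- T, r <- take (H (x - tau)) (enum 'I_(t - 1))].

Definition fibre_piece x (j : 'rV[int]_b * 'I_(t - 1)) := A j.2 (g (x - j.1)).

Lemma H_le_enum p : (H p <= size (enum 'I_(t - 1)))%N.
Proof. by rewrite size_enum_ord; have := H_lt p; lia. Qed.

Lemma mem_fibre_index x tau r :
  ((tau, r) \in fibre_index x) = (tau \in T) && (r < H (x - tau))%N.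
Proof.
apply/allpairsPdep/andP => [[tau' [r' [tau'T r'H [-> ->]]]] | [tauT rH]].
  by rewrite in_take_leq ?H_le_enum // index_enum_ord in r'H.
by exists tau, r; rewrite in_take_leq ?H_le_enum // index_enum_ord.
Qed.

Lemma size_fibre_index x : size (fibre_index x) = (\sum_(tau <- T) H (x - tau))%N.
Proof.
rewrite size_allpairs_dep sumnE big_map; apply: eq_bigr => tau _.
by rewrite size_takel ?H_le_enum.
Qed.

Lemma fibre_index_uniq x : uniq (fibre_index x).
Proof.
apply: allpairs_uniq_dep => [|tau _|]; rewrite ?fset_uniq ?take_uniq ?enum_uniq //.
by move=> [tau r] [tau' r'] _ _ /= [-> ->].
Qed.

Lemma fibre_piece_inj x : {in fibre_index x &, injective (fibre_piece x)}.
Proof.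
move=> [tau r] [tau' r']; rewrite !mem_fibre_index => /andP[tauT _] /andP[tau'T _] eqA.
have [/= <- eq_g] := A_inj (x1 := (r, g (x - tau))) (x2 := (r', g (x - tau'))) eqA.
suff /subrI -> : x - tau = x - tau' by [].
by apply: g_sep tauT tau'T _ eq_g; rewrite !subrKC.
Qed.

Lemma tiling_fibre x :
  [set y | tiling (x, y)] = \bigcup_(j in [set` fibre_index x]) fibre_piece x j.
Proof.
apply/seteqP; split=> y /=.
  move=> [_ [p [r [rH ->]]] [[tau tauT /= e] Ay]].
  exists (tau, r); last by rewrite /fibre_piece -e addrC addKr.
  by rewrite /= mem_fibre_index tauT -e addrC addKr.
move=> [[tau r]]; rewrite /= mem_fibre_index => /andP[tauT rH] Ay.
exists (block (x - tau) r); first by exists (x - tau), r.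
by split=> //; exists tau; rewrite // subrKC.
Qed.

Lemma tiling_fibre_count x : exists m : nat, (m = 1 %[mod t])%N /\
  exists f : 'I_m -> set S, injective f /\ (forall i, F (f i)) /\
    [set y | tiling (x, y)] = \bigcup_(i in [set: 'I_m]) f i.
Proof.
rewrite tiling_fibre.
have [f [f_inj f_piece ->]] := bigcup_seq_enum (fibre_index_uniq x) (@fibre_piece_inj x).
exists (size (fibre_index x)); split; first by rewrite size_fibre_index H_sum.
exists f; split=> //; split=> [i|//].
by have [[tau r] _ ->] := f_piece i; exact: A_F.
Qed.

End Tiling.

Theorem lemma13 (t b : nat) (T : {fset 'rV[int]_b}) (S : Type)
    (F : set (set S)) :
  (0 < t)%N -> (0 < b)%N -> T != fset0 ->
  pw_disjoint F ->
  (* F has at least (t-1)|T|^2 members *)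
  (exists g : 'I_((t - 1) * (#|` T| ^ 2)) -> set S,
      injective g /\ forall i, F (g i)) ->
  exists X : set ('rV[int]_b * S),
    (* (1) X is a union of pairwise disjoint sets (T+x) x A, x in Z^b, A in F *)
    (exists Q : set (set ('rV[int]_b * S)),
        (forall B, Q B -> exists x A, F A /\ B = translate T x `*` A) /\
        pw_disjoint Q /\
        X = \bigcup_(B in Q) B) /\
    (* (2) every fibre of X is a union of m distinct members of F, m = 1 mod t *)
    (forall x : 'rV[int]_b, exists m : nat, (m = 1 %[mod t])%N /\
        exists f : 'I_m -> set S, injective f /\ (forall i, F (f i)) /\
          [set y | X (x, y)] = \bigcup_(i in [set: 'I_m]) f i).
Proof.
move=> t_gt0 _ T_neq0 F_disj F_large.
have [A [A_inj A_F]] := pair_indexed_family F_large.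
have [g g_sep] := translate_colouring T_neq0.
have [H [H_lt H_sum]] := lattice_convolution_solution t_gt0 T_neq0.
exists (tiling T A g H); split; last exact: tiling_fibre_count.
exists (blocks T A g H); split.
  by move=> _ [p [r [_ ->]]]; exists p, (A r (g p)).
by split=> //; exact: (blocks_disjoint F_disj A_inj A_F g_sep).
Qed.
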